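(* Let $(\mathfrak{g}_\sigma,\mathfrak{q})$ be a reductive $CR$-algebra with invariant complement $\mathfrak{q}^c$. Then $\mathfrak{N}(\mathfrak{q},\mathfrak{q}^c)=\{Z\in\mathfrak{q}\mid[Z,\mathfrak{q}^c]\subseteq\mathfrak{q}^c\}$ is a Lie subalgebra of $\mathfrak{q}$ containing $\mathfrak{q}\cap\sigma(\mathfrak{q})$, and for every $Z\in\mathfrak{N}(\mathfrak{q},\mathfrak{q}^c)\setminus\sigma(\mathfrak{q})$ the Levi-order of $\sigma(Z)$ is either $1$ or $+\infty$.
   Context: $\mathfrak{g}$ is a finite-dimensional complex Lie algebra, $\sigma$ an anti-$\mathbb{C}$-linear involution, $\mathfrak{g}_\sigma$ its fixed points; $(\mathfrak{g}_\sigma,\mathfrak{q})$ with $\mathfrak{q}$ a complex subalgebra of $\mathfrak{g}$ is a $CR$-algebra. It is reductive if there is a $\mathbb{C}$-linear complement $\mathfrak{q}^c$ of $\mathfrak{q}$ in $\mathfrak{g}$ (an invariant complement) with $[\mathfrak{q}\cap\sigma(\mathfrak{q}),\mathfrak{q}^c]\subseteq\mathfrak{q}^c$ and $\mathfrak{g}=(\mathfrak{q}\cap\sigma(\mathfrak{q}))\oplus(\mathfrak{q}\cap\sigma(\mathfrak{q}^c))\oplus(\mathfrak{q}^c\cap\sigma(\mathfrak{q}))\oplus(\mathfrak{q}^c\cap\sigma(\mathfrak{q}^c))$. Higher order commutators: $[X_1,\dots,X_h]=[[X_1,\dots,X_{h-1}],X_h]$. For $W\in\sigma(\mathfrak{q})\setminus\mathfrak{q}$,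 its Levi-order is the least $k$ such that there exist $Z_1,\dots,Z_k\in\mathfrak{q}$ with $[W,Z_1,\dots,Z_k]\notin\mathfrak{q}+\sigma(\mathfrak{q})$, and $+\infty$ if no such $k$ exists. *)

(* complex numbers as R[i] for R : realType (so R[i] is C). *)
From HB Require Import structures.
From mathcomp Require Import all_boot all_order all_algebra.
From mathcomp Require Import complex reals.
Set Implicit Arguments. Unset Strict Implicit. Unset Printing Implicit Defensive.
Import Order.TTheory GRing.Theory Num.Theory.
Local Open Scope ring_scope.

Section LieCR.
Variables (R : realType) (L : vectType R[i]).

Definition is_lie_bracket (br : L -> L -> L) : Prop :=
  [/\ (forall (a : R[i]) x y z, br (a *: x + y) z = a *: br x z + br y z),
      (forall (a : R[i]) x y z, br z (a *: x + y) = a *: br z x + br z y),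
      (forall x, br x x = 0) &
      (forall x y z, br x (br y z) + br y (br z x) + br z (br x y) = 0)].

Definition is_conjugation (br : L -> L -> L) (sigma : L -> L) : Prop :=
  [/\ (forall x y, sigma (x + y) = sigma x + sigma y),
      (forall (a : R[i]) x, sigma (a *: x) = conjc a *: sigma x),
      (forall x, sigma (sigma x) = x) &
      (forall x y, sigma (br x y) = br (sigma x) (sigma y))].

Definition is_subalgebra (br : L -> L -> L) (q : {vspace L}) : Prop :=
  forall x y, x \in q -> y \in q -> br x y \in q.

(* sigma(U) as a complex subspace: the span of the images of a basis of U
   (for an anti-linear involution this is exactly {sigma u | u in U}). *)
Definition sigma_vs (sigma : L -> L) (U : {vspace L}) : {vspace L} :=
  <<map sigma (vbasis U)>>%VS.

Definition reductive_CR (br : L -> L -> L) (sigma : L -> L)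
    (q qc : {vspace L}) : Prop :=
  [/\ (q + qc)%VS = fullv, (q :&: qc)%VS = 0%VS,
      (forall a b, a \in (q :&: sigma_vs sigma q)%VS -> b \in qc -> br a b \in qc),
      ((q :&: sigma_vs sigma q) + (q :&: sigma_vs sigma qc)
        + (qc :&: sigma_vs sigma q) + (qc :&: sigma_vs sigma qc))%VS = fullv &
      directv ((q :&: sigma_vs sigma q) + (q :&: sigma_vs sigma qc)
        + (qc :&: sigma_vs sigma q) + (qc :&: sigma_vs sigma qc))].

Definition Nqqc (br : L -> L -> L) (q qc : {vspace L}) (Z : L) : Prop :=
  Z \in q /\ forall Y, Y \in qc -> br Z Y \in qc.

Definition is_lie_subalgebra_of (br : L -> L -> L) (q : {vspace L})
    (N : L -> Prop) : Prop :=
  [/\ (forall Z, N Z -> Z \in q), N 0,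
      (forall (a : R[i]) Z W, N Z -> N W -> N (a *: Z + W)) &
      (forall Z W, N Z -> N W -> N (br Z W))].

Definition iter_br (br : L -> L -> L) (W : L) (s : seq L) : L := foldl br W s.

Definition levi_witness (br : L -> L -> L) (sigma : L -> L) (q : {vspace L})
    (W : L) (k : nat) : Prop :=
  exists s : seq L, [/\ size s = k, all (fun z => z \in q) s &
    iter_br br W s \notin (q + sigma_vs sigma q)%VS].

(* levi_order_is ... W (Some k): the Levi-order of W is k (least k >= 1);
   levi_order_is ... W None: the Levi-order of W is +infinity. *)
Definition levi_order_is (br : L -> L -> L) (sigma : L -> L) (q : {vspace L})
    (W : L) (k : option nat) : Prop :=
  match k with
  | Some k => (0 < k)%N /\ levi_witness br sigma q W k /\
      forall j, (0 < j < k)%N -> ~ levi_witness br sigma q W j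
  | None => forall j, (0 < j)%N -> ~ levi_witness br sigma q W j
  end.

End LieCR.

(* The claims on N(q, q^c) follow from the Jacobi identity.  For the
   Levi-order, assume no single bracket [sigma Z, X] with X in q leaves
   q + sigma(q); after conjugating by sigma, iterated brackets of Z with
   elements of sigma(q) must stay in q + sigma(q).  The reductive decomposition
   gives sigma(q) = (q cap sigma(q)) + (q^c cap sigma(q)), and the assumption
   says that ad Z maps q^c cap sigma(q) into sigma(q).  Elements of N(q, q^c)
   with this extra property are stable under bracketing with q cap sigma(q),
   so every iterated bracket is n + s with such an n and s in sigma(q). *)
From HB Require Import structures.
From mathcomp Require Import all_boot all_order all_algebra.
From mathcomp Require Import complex reals.
From Stdlib Require Import Classical_Prop.
Import Order.TTheory GRing.Theory Num.Theory.
Set Implicit Arguments. Unset Strict Implicit.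
Local Open Scope ring_scope.

Section LieAlgebra.
Variables (R : realType) (L : vectType R[i]) (br : L -> L -> L).
Hypothesis lie_br : is_lie_bracket br.

Lemma lie_brDl x y z : br (x + y) z = br x z + br y z.
Proof. by case: lie_br => linl _ _ _; have := linl 1 x y z; rewrite !scale1r. Qed.

Lemma lie_brDr x y z : br z (x + y) = br z x + br z y.
Proof. by case: lie_br => _ linr _ _; have := linr 1 x y z; rewrite !scale1r. Qed.

Lemma lie_br0l z : br 0 z = 0.
Proof. by apply: (addrI (br 0 z)); rewrite -lie_brDl !addr0. Qed.

Lemma lie_brC x y : br x y = - br y x.
Proof.
case: lie_br => _ _ brxx _; apply/eqP; rewrite -addr_eq0.
by have := brxx (x + y); rewrite lie_brDl !lie_brDr !brxx add0r addr0 => ->.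
Qed.

Lemma lie_jacobi x y z : br (br x y) z = br x (br y z) + br y (br z x).
Proof.
case: lie_br => _ _ _ jacobi; have /eqP := jacobi x y z.
by rewrite addr_eq0 => /eqP ->; rewrite lie_brC.
Qed.

Lemma Nqqc_lie_subalgebra (q qc : {vspace L}) :
  is_subalgebra br q -> is_lie_subalgebra_of br q (Nqqc br q qc).
Proof.
case: lie_br => linl _ _ _ subq; split.
- by move=> Z [].
- by split=> [|Y _]; rewrite ?lie_br0l mem0v.
- move=> a Z W [Zq Zqc] [Wq Wqc]; split=> [|Y Yqc]; first by rewrite rpredD ?rpredZ.
  by rewrite linl rpredD ?rpredZ ?Zqc ?Wqc.
- move=> Z W [Zq Zqc] [Wq Wqc]; split=> [|Y Yqc]; first exact: subq.
  by rewrite lie_jacobi rpredD ?Zqc ?Wqc // lie_brC rpredN Zqc.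
Qed.

End LieAlgebra.

Section Conjugation.
Variables (R : realType) (L : vectType R[i]) (br : L -> L -> L) (sigma : L -> L).
Hypothesis conj_sigma : is_conjugation br sigma.

Lemma conj0 : sigma 0 = 0.
Proof.
case: conj_sigma => conjD _ _ _.
by apply: (addrI (sigma 0)); rewrite -conjD !addr0.
Qed.

Lemma conj_sum (I : Type) (r : seq I) (P : pred I) (F : I -> L) :
  sigma (\sum_(i <- r | P i) F i) = \sum_(i <- r | P i) sigma (F i).
Proof. by case: conj_sigma => conjD _ _ _; apply: (big_morph sigma conjD conj0). Qed.

Lemma mem_sigma_vs (U : {vspace L}) x : (x \in sigma_vs sigma U) = (sigma x \in U).
Proof.
case: conj_sigma => _ conjZ conjK _; apply/idP/idP => [xU | sxU].
- rewrite (coord_span (X := map_tuple sigma (vbasis U)) xU) conj_sum.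
  apply: rpred_sum => i _; rewrite conjZ rpredZ //= (nth_map 0) ?size_tuple //.
  by rewrite conjK vbasis_mem // mem_nth ?size_tuple.
- rewrite -(conjK x) (coord_vbasis sxU) conj_sum; apply: rpred_sum => i _.
  by rewrite conjZ rpredZ // memv_span // map_f // mem_nth ?size_tuple.
Qed.

Lemma conj_iter_br W s :
  sigma (iter_br br W s) = iter_br br (sigma W) (map sigma s).
Proof.
case: conj_sigma => _ _ _ conj_br.
by elim: s W => [//|x s IHs] W /=; rewrite /iter_br /= in IHs *; rewrite IHs conj_br.
Qed.

Lemma conj_mem_addv_sigma (q : {vspace L}) x :
  x \in (q + sigma_vs sigma q)%VS -> sigma x \in (q + sigma_vs sigma q)%VS.
Proof.
case: (conj_sigma) => conjD _ conjK _ /memv_addP[u uq [v vsq ->]].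
rewrite conjD addrC memv_add //; first by rewrite -mem_sigma_vs.
by rewrite mem_sigma_vs // conjK.
Qed.

Lemma sigma_vs_subalgebra (q : {vspace L}) :
  is_subalgebra br q -> is_subalgebra br (sigma_vs sigma q).
Proof.
case: conj_sigma => _ _ _ conj_br subq x y.
by rewrite !mem_sigma_vs conj_br; apply: subq.
Qed.

End Conjugation.

Section LeviOrder.
Variables (R : realType) (L : vectType R[i]) (br : L -> L -> L) (sigma : L -> L).
Variables (q : {vspace L}) (W : L).

Lemma levi_order_1 X :
  X \in q -> br W X \notin (q + sigma_vs sigma q)%VS ->
  levi_order_is br sigma q W (Some 1%N).
Proof.
move=> Xq WXq; do 2!split=> //; first by exists [:: X]; rewrite /= Xq.
by case=> [|[]].
Qed.

Lemma levi_order_infty :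
  (forall s, all (fun z => z \in q) s ->
     iter_br br W s \in (q + sigma_vs sigma q)%VS) ->
  levi_order_is br sigma q W None.
Proof. by move=> iter_in j _ [s [_ sq]]; rewrite iter_in. Qed.

End LeviOrder.

Section ReductiveCR.
Variables (R : realType) (L : vectType R[i]) (br : L -> L -> L) (sigma : L -> L).
Variables (q qc : {vspace L}).
Hypotheses (lie_br : is_lie_bracket br) (conj_sigma : is_conjugation br sigma).
Hypotheses (subq : is_subalgebra br q) (red : reductive_CR br sigma q qc).

Local Notation sq := (sigma_vs sigma q).

Lemma mem_q_qc_eq0 x : x \in q -> x \in qc -> x = 0.
Proof.
case: red => _ qqc0 _ _ _ xq xqc.
by apply/eqP; rewrite -memv0 -qqc0 memv_cap xq.
Qed.

Lemma qc_invariant a Y : a \in (q :&: sq)%VS -> Y \in qc -> br a Y \in qc.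
Proof. by case: red => _ _ inv _ _; apply: inv. Qed.

Lemma sigma_q_decomp y : y \in sq ->
  exists a c, [/\ a \in (q :&: sq)%VS, c \in (qc :&: sq)%VS & y = a + c].
Proof.
move=> ysq; have : y \in fullv := memvf y.
case: red => _ _ _ <- _ /memv_addP[? /memv_addP[? /memv_addP[a aA [b bB ->]]]].
move=> [c cC ->] [d dD Ey]; exists a, c; split=> //.
move: aA bB cC dD; rewrite !memv_cap => /andP[_ asq] /andP[bq bsqc].
move=> /andP[_ csq] /andP[dqc dsqc].
have Ey' : y = (a + c) + (b + d) by rewrite Ey -addrA addrACA.
have Ebd : b + d = y - (a + c) by rewrite Ey' addrAC subrr add0r.
suff bd0 : b + d = 0 by rewrite Ey' bd0 addr0.
have bd_sq : b + d \in sq by rewrite Ebd rpredB ?rpredD.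
have bd_sqc : b + d \in sigma_vs sigma qc by rewrite rpredD.
rewrite !(mem_sigma_vs conj_sigma) in bd_sq bd_sqc.
case: conj_sigma => _ _ conjK _.
by rewrite -[b + d]conjK (mem_q_qc_eq0 bd_sq bd_sqc) (conj0 conj_sigma).
Qed.

Lemma qcap_sub_Nqqc Z : Z \in (q :&: sq)%VS -> Nqqc br q qc Z.
Proof.
by move=> Zqsq; split=> [|Y]; [case/memv_capP: Zqsq | apply: qc_invariant].
Qed.

Definition Nsigma (n : L) : Prop :=
  Nqqc br q qc n /\ forall c, c \in (qc :&: sq)%VS -> br n c \in sq.

Lemma Nsigma_br n a : Nsigma n -> a \in (q :&: sq)%VS -> Nsigma (br n a).
Proof.
move=> [[nq nqc] nsq] aqsq; have /memv_capP[aq asq] := aqsq.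
have subsq := sigma_vs_subalgebra conj_sigma subq.
have brN x y : br x y = - br y x := lie_brC lie_br x y.
split; first split=> [|Y Yqc]; first exact: subq.
- rewrite (lie_jacobi lie_br) rpredD //; first by rewrite nqc ?qc_invariant.
  by rewrite qc_invariant // brN rpredN nqc.
- move=> c /memv_capP[cqc csq]; rewrite (lie_jacobi lie_br) rpredD //.
    by rewrite nsq // memv_cap qc_invariant // subsq.
  by rewrite subsq // brN rpredN nsq // memv_cap cqc.
Qed.

Definition Nsigma_plus_sq (t : L) : Prop := exists2 n, Nsigma n & t - n \in sq.

Lemma Nsigma_plus_sq_br t y :
  Nsigma_plus_sq t -> y \in sq -> Nsigma_plus_sq (br t y).
Proof.
move=> [n Nn tnsq] ysq; have [a [c [aqsq cqcsq Ey]]] := sigma_q_decomp ysq.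
exists (br n a); first exact: Nsigma_br.
have -> : br t y = br n a + (br n c + br (t - n) y).
  by rewrite addrA -(lie_brDr lie_br) -Ey -(lie_brDl lie_br) subrKC.
rewrite addrC addKr rpredD //; first by case: Nn => _; apply.
exact: (sigma_vs_subalgebra conj_sigma subq).
Qed.

Lemma Nsigma_plus_sq_iter_br t s :
  Nsigma_plus_sq t -> all (fun y => y \in sq) s -> iter_br br t s \in (q + sq)%VS.
Proof.
elim: s t => [|y s IHs] t /= tN.
  by case: tN => n [[nq _] _] tnsq _; rewrite -(subrKC n t) memv_add.
by case/andP=> ysq ssq; apply: IHs => //; apply: Nsigma_plus_sq_br.
Qed.

(* [Z, c] = sigma [sigma Z, sigma c] lies in q + sigma(q); splitting its
   sigma(q)-part along q cap sigma(q) and q^c cap sigma(q), the q-part lies in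
   q cap q^c = 0. *)
Lemma Nqqc_Nsigma Z : Nqqc br q qc Z ->
  (forall X, X \in q -> br (sigma Z) X \in (q + sq)%VS) -> Nsigma Z.
Proof.
move=> [Zq Zqc] levi1; split=> // c /memv_capP[cqc csq].
case: (conj_sigma) => _ _ conjK conj_br.
have : sigma (br (sigma Z) (sigma c)) \in (q + sq)%VS.
  apply: (conj_mem_addv_sigma conj_sigma).
  by rewrite levi1 // -(mem_sigma_vs conj_sigma).
rewrite conj_br !conjK => /memv_addP[u uq [v vsq Ev]].
have [a [c' [/memv_capP[aq _] /memv_capP[c'qc c'sq] Ev']]] := sigma_q_decomp vsq.
suff /eqP : br Z c - c' = 0 by rewrite subr_eq0 => /eqP ->.
apply: mem_q_qc_eq0; last by rewrite rpredB ?Zqc.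
by rewrite Ev Ev' addrA addrK rpredD.
Qed.

Lemma iter_br_conj_mem Z : Nqqc br q qc Z ->
  (forall X, X \in q -> br (sigma Z) X \in (q + sq)%VS) ->
  forall s, all (fun z => z \in q) s -> iter_br br (sigma Z) s \in (q + sq)%VS.
Proof.
move=> NZ levi1 s sq_s; case: (conj_sigma) => _ _ conjK _.
rewrite -[iter_br _ _ _]conjK (conj_iter_br conj_sigma) conjK.
apply: (conj_mem_addv_sigma conj_sigma); apply: Nsigma_plus_sq_iter_br.
  by exists Z; [apply: Nqqc_Nsigma | rewrite subrr mem0v].
by rewrite all_map; apply: sub_all sq_s => x /=; rewrite (mem_sigma_vs conj_sigma) conjK.
Qed.

End ReductiveCR.

Unset Implicit Arguments. Set Strict Implicit.

(* The hypothesis Z \notin sigma(q) only makes sigma Z \notin q, i.e. makes the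
   Levi-order of sigma Z meaningful; levi_order_is does not require it. *)
Theorem mainTheorem5 (R : realType) (L : vectType R[i])
    (br : L -> L -> L) (sigma : L -> L) (q qc : {vspace L}) :
  is_lie_bracket br -> is_conjugation br sigma -> is_subalgebra br q ->
  reductive_CR br sigma q qc ->
  is_lie_subalgebra_of br q (Nqqc br q qc) /\
  (forall Z, Z \in (q :&: sigma_vs sigma q)%VS -> Nqqc br q qc Z) /\
  (forall Z, Nqqc br q qc Z -> Z \notin sigma_vs sigma q ->
     levi_order_is br sigma q (sigma Z) (Some 1%N) \/
     levi_order_is br sigma q (sigma Z) None).
Proof.
move=> lie_br conj_sigma subq red.
split; first exact: (Nqqc_lie_subalgebra lie_br qc subq).
split; first exact: (qcap_sub_Nqqc red).
move=> Z NZ _.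
have [[X [Xq WX]] | no_levi1] :=
  classic (exists X, X \in q /\ br (sigma Z) X \notin (q + sigma_vs sigma q)%VS).
  by left; exact: (levi_order_1 Xq WX).
right; apply: levi_order_infty.
apply: (iter_br_conj_mem lie_br conj_sigma subq red NZ) => X Xq.
by apply/negPn/negP => WX; apply: no_levi1; exists X.
Qed.
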